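(* Let $R$ be a nonabelian group whose order is a product of two distinct primes, and let $S\subseteq R$. If $\mathrm{Cay}(R,S)$ is a nontrivial generalised wreath product, then $\mathrm{Aut}(R)_S>1$.
   Context: $\mathrm{Aut}(R)_S$ is the group of automorphisms of $R$ fixing $S$ setwise. $\mathrm{Cay}(R,S)$ (vertex set $R$, arcs $r\to sr$ for $s\in S$) is a nontrivial generalised wreath product if there exist subgroups $K,H$ with $1<K\trianglelefteq H<R$ and $K(S\setminus H)=S\setminus H=(S\setminus H)K$. *)

From mathcomp Require Import all_boot all_fingroup.
Set Implicit Arguments. Unset Strict Implicit. Unset Printing Implicit Defensive.
Local Open Scope group_scope.

Definition nontrivial_gwp (gT : finGroupType) (R : {group gT}) (S : {set gT}) :=
  exists K H : {group gT},
    [/\ K :!=: 1, K <| H, H \proper R,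
        K * (S :\: H) = S :\: H & (S :\: H) * K = S :\: H].

Definition AutS (gT : finGroupType) (R : {group gT}) (S : {set gT}) :
  {set {perm gT}} := [set a in Aut R | a @: S == S].

(* Pick k != 1 in K.  Conjugation by k fixes S: it fixes S :&: H pointwise
   because proper subgroups of a group of order pq have prime or trivial order,
   hence are abelian, and it maps S :\: H = K (S :\: H) K into itself.  It is
   a nontrivial automorphism because a nonabelian group of order pq has trivial
   centre: otherwise R / 'Z(R) would be cyclic.  The argument never uses
   p != q. *)
From mathcomp Require Import all_boot all_fingroup.
From mathcomp Require Import cyclic center.

Set Implicit Arguments.
Unset Strict Implicit.
Unset Printing Implicit Defensive.

Local Open Scope group_scope.

Section OrderPQ.

Variables p q : nat.
Hypotheses (p_pr : prime p) (q_pr : prime q).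

Lemma proper_dvdn_pq_prime d : d %| p * q -> d < p * q -> d = 1%N \/ prime d.
Proof.
move=> d_dv d_lt; have [-> | d_neq1] := eqVneq d 1%N; [by left | right].
have [/dvdnP[e de] | p_ndv] := boolP (p %| d).
  move: d_dv d_lt; rewrite de mulnC dvdn_pmul2l ?prime_gt0 // => e_dv.
  have [-> | e_neq1] := eqVneq e 1%N; first by rewrite muln1.
  by rewrite (prime_nt_dvdP q_pr e_neq1 e_dv) ltnn.
have d_dvq : d %| q.
  by rewrite -(Gauss_dvdr _ (_ : coprime d p)) // coprime_sym prime_coprime.
by rewrite (prime_nt_dvdP q_pr d_neq1 d_dvq).
Qed.

Lemma proper_dvdn_pq_cyclic (gT : finGroupType) (G : {group gT}) :
  #|G| %| p * q -> #|G| < p * q -> cyclic G.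
Proof.
move=> G_dv G_lt; case: (proper_dvdn_pq_prime G_dv G_lt) => [/card1_trivg -> |].
  exact: cyclic1.
exact: prime_cyclic.
Qed.

Variables (gT : finGroupType) (R : {group gT}).
Hypothesis cardR : #|R| = (p * q)%N.

Lemma proper_sub_pq_abelian (H : {group gT}) : H \proper R -> abelian H.
Proof.
move=> ltHR; apply/cyclic_abelian/proper_dvdn_pq_cyclic; rewrite -cardR.
  exact/cardSg/proper_sub.
exact: proper_card.
Qed.

Lemma nonabelian_pq_center_trivial : ~~ abelian R -> 'Z(R) = 1.
Proof.
move=> nabR; apply/eqP; apply: contraR nabR => ntZ.
apply/cyclic_center_factor_abelian/proper_dvdn_pq_cyclic.
  by rewrite card_quotient ?normal_norm ?center_normal // -cardR dvdn_indexg.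
rewrite card_quotient ?normal_norm ?center_normal // -cardR -(Lagrange (center_sub R)).
by rewrite ltn_Pmull ?cardG_gt1 ?indexg_gt0.
Qed.

End OrderPQ.

Lemma gwp_conj_closed (gT : finGroupType) (S : {set gT}) (K H : {group gT}) k :
    K * (S :\: H) = S :\: H -> (S :\: H) * K = S :\: H ->
    k \in K -> H \subset 'C[k] ->
  {in S, forall s, s ^ k \in S}.
Proof.
move=> KS SK Kk cHk s Ss; have [Hs | nHs] := boolP (s \in H).
  by have /cent1P/commgP/conjg_fixP-> := subsetP cHk s Hs.
have SHs : s \in S :\: H by rewrite inE nHs.
have SHks : k^-1 * s \in S :\: H by rewrite -KS mem_mulg ?groupV.
have : k^-1 * s * k \in S :\: H by rewrite -{1}SK mem_mulg.
by rewrite -mulgA -conjgE => /setDP[].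
Qed.

Lemma conj_aut_AutS (gT : finGroupType) (R : {group gT}) (S : {set gT}) k :
  k \in R -> S \subset R -> {in S, forall s, s ^ k \in S} ->
  conj_aut R k \in AutS R S.
Proof.
move=> Rk sSR Sk; rewrite inE Aut_aut /= eqEcard.
rewrite card_imset ?leqnn ?andbT; last exact: perm_inj.
by apply/subsetP => _ /imsetP[s Ss ->]; rewrite conj_autE ?Sk // (subsetP sSR).
Qed.

Lemma conj_aut1_center (gT : finGroupType) (R : {group gT}) k :
  k \in R -> conj_aut R k = 1 -> k \in 'Z(R).
Proof.
move=> Rk ak1.
have : k \in 'ker (conj_aut R) by apply/kerP; rewrite ?(subsetP (normG R)).
by rewrite ker_conj_aut inE Rk.
Qed.

Theorem corollary4p8 (gT : finGroupType) (R : {group gT}) (S : {set gT})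
    (p q : nat) :
  prime p -> prime q -> p != q -> #|R| = (p * q)%N -> ~~ abelian R ->
  S \subset R ->
  nontrivial_gwp R S ->
  AutS R S != [set 1].
Proof.
move=> p_pr q_pr _ cardR nabR sSR [K [H [ntK nsKH ltHR KS SK]]].
have [k Kk ntk] := trivgPn _ ntK.
have Hk : k \in H := subsetP (normal_sub nsKH) k Kk.
have Rk : k \in R := subsetP (proper_sub ltHR) k Hk.
have cHk : H \subset 'C[k].
  by rewrite sub_cent1 (subsetP (proper_sub_pq_abelian p_pr q_pr cardR ltHR)).
have := conj_aut_AutS Rk sSR (gwp_conj_closed KS SK Kk cHk).
apply: contraTneq => ->; apply/negP => /set1P/(conj_aut1_center Rk).
by rewrite (nonabelian_pq_center_trivial p_pr q_pr cardR nabR) inE (negbTE ntk).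
Qed.
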